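(* Let $a>0$, $b>0$, $T>0$, let $f$ be a $1$-periodic, twice continuously differentiable function with $\kappa=\inf_{0\le t\le1}f(t)>0$, and let $\vartheta>0$. For $\varepsilon>0$ let $\gamma(\vartheta,\cdot)$ be the solution on $[0,T]$ of the Riccati equation $$\frac{\partial\gamma(\vartheta,t)}{\partial t}=-2a\gamma(\vartheta,t)-\frac{\gamma(\vartheta,t)^2f(\vartheta t)^2}{\varepsilon^2}+b^2,\qquad\gamma(\vartheta,0)=0.$$ Then for any $t_0\in(0,T]$, $$\sup_{t_0\le t\le T}\Big|\gamma(\vartheta,t)-\frac{b\,\varepsilon}{f(\vartheta t)}\Big|=O(\varepsilon^2)\quad\text{as }\varepsilon\to0.$$
   Context: $\gamma(\vartheta,t)$ is the variance of the Kalman–Bucy filtering error for the signal $Y_t$ (an Ornstein–Uhlenbeck process $dY_t=-aY_tdt+b\,dV_t$) observed through $dX_t=f(\vartheta t)Y_tdt+\varepsilon dW_t$. *)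

From Stdlib Require Import Reals.
From Coquelicot Require Import Coquelicot.
Open Scope R_scope.

Definition C2 (f : R -> R) : Prop :=
  forall x, ex_derive f x /\ ex_derive (Derive f) x /\
            continuous (Derive_n f 2) x.

Definition periodic1 (f : R -> R) : Prop := forall t, f (t + 1) = f t.

Definition riccati_solution (a b theta eps T : R) (f g : R -> R) : Prop :=
  g 0 = 0 /\
  (forall t, 0 <= t <= T -> continuous g t) /\
  (forall t, 0 < t < T ->
     is_derive g t (- 2 * a * g t - (g t) ^ 2 * (f (theta * t)) ^ 2 / eps ^ 2 + b ^ 2)).

From Stdlib Require Import Reals ZArith Lra Lia.
From Coquelicot Require Import Coquelicot.
Open Scope R_scope.

(* Write p s = f (theta s), so that g = gamma eps solves
   g' = -2 a g - g^2 p^2 / eps^2 + b^2, g 0 = 0, and let q = b eps / p be the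
   quasi-stationary value, at which the two dominant terms cancel.  A function
   whose derivative is positive wherever it vanishes cannot change sign, which
   gives comparison with barriers: g stays nonnegative (g' = b^2 where g = 0),
   q + K eps^2 is a supersolution, and q - K eps^2 - A eps^2 / (eps + c s) is a
   subsolution, for constants K, A, c depending only on a, b, inf f and a bound
   on theta f'.  The last term is a boundary layer absorbing the initial
   mismatch g 0 = 0 < q 0; it is at most (A / (c t0)) eps^2 for s >= t0. *)

Lemma continuous_locally_lt (h : R -> R) t y :
  continuous h t -> h t < y -> exists d : posreal, forall u, Rabs (u - t) < d -> h u < y.
Proof.
  intros Hc Hy.
  destruct (Hc _ (open_lt y (h t) Hy)) as [d Hd].
  exists d; intros u Hu; apply Hd; exact Hu.
Qed.

Lemma continuous_locally_gt (h : R -> R) t y :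
  continuous h t -> y < h t -> exists d : posreal, forall u, Rabs (u - t) < d -> y < h u.
Proof.
  intros Hc Hy.
  destruct (Hc _ (open_gt y (h t) Hy)) as [d Hd].
  exists d; intros u Hu; apply Hd; exact Hu.
Qed.

Lemma is_derive_pos_left_lt (h : R -> R) t d :
  is_derive h t d -> 0 < d -> exists del : posreal, forall u, t - del < u < t -> h u < h t.
Proof.
  intros Hd Hpos.
  destruct (proj1 (is_derive_Reals h t d) Hd d Hpos) as [del Hdel].
  exists del; intros u Hu.
  assert (Hquot : 0 < (h (t + (u - t)) - h t) / (u - t)).
  { specialize (Hdel (u - t) ltac:(lra) ltac:(apply Rabs_def1; lra)).
    apply Rabs_def2 in Hdel; lra. }
  replace (t + (u - t)) with u in Hquot by ring.
  assert (Heq : h u - h t = (h u - h t) / (u - t) * (u - t)) by (field; lra).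
  nra.
Qed.

Lemma first_nonpos_point (h : R -> R) s :
  0 <= s -> 0 < h 0 -> (forall t, 0 <= t <= s -> continuous h t) -> h s <= 0 ->
  exists tau, 0 < tau <= s /\ h tau <= 0 /\ forall u, 0 <= u < tau -> 0 < h u.
Proof.
  intros Hs H0 Hcont Hhs.
  set (E := fun t => 0 <= t <= s /\ forall u, 0 <= u <= t -> 0 < h u).
  assert (E0 : E 0) by (split; [lra | intros u Hu; replace u with 0 by lra; exact H0]).
  destruct (completeness E) as [tau [Hub Hlub]];
    [exists s; intros t [Ht _]; lra | exists 0; exact E0 |].
  assert (Htau : 0 <= tau <= s) by (split; [apply Hub, E0 | apply Hlub; intros t [Ht _]; lra]).
  assert (Hbefore : forall u, 0 <= u < tau -> 0 < h u).
  { intros u Hu; apply Rnot_le_lt; intros Hle.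
    assert (tau <= u); [|lra].
    apply Hlub; intros t [Ht Hpos]; apply Rnot_lt_le; intros Hut.
    specialize (Hpos u ltac:(lra)); lra. }
  assert (Hnotpos : h tau <= 0).
  { apply Rnot_lt_le; intros Hpos.
    destruct (Req_dec tau s) as [Hts|Hts]; [rewrite Hts in Hpos; lra|].
    destruct (continuous_locally_gt h tau 0 (Hcont tau Htau) Hpos) as [[d Hd] Hnear].
    simpl in Hnear.
    set (t' := Rmin (tau + d / 2) s).
    assert (Ht' : E t').
    { split; [unfold t', Rmin; destruct Rle_dec; lra|].
      intros u Hu; destruct (Rlt_or_le u tau); [apply Hbefore; lra|].
      apply Hnear; unfold t', Rmin in Hu; destruct Rle_dec; apply Rabs_def1; lra. }
    specialize (Hub t' Ht'); unfold t', Rmin in Hub; destruct Rle_dec; lra. }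
  exists tau; split; [|split; assumption].
  destruct (Req_dec tau 0) as [Hz|Hz]; [rewrite Hz in Hnotpos; lra | lra].
Qed.

Lemma barrier_nonneg (h h' : R -> R) (T : R) :
  0 < h 0 ->
  (forall t, 0 <= t <= T -> continuous h t) ->
  (forall t, 0 < t < T -> is_derive h t (h' t)) ->
  (forall t, 0 < t < T -> h t = 0 -> 0 < h' t) ->
  forall s, 0 <= s <= T -> 0 <= h s.
Proof.
  intros H0 Hcont Hder Hcross s Hs.
  apply Rnot_lt_le; intros Hneg.
  destruct (first_nonpos_point h s) as [tau [Htau [Hnotpos Hbefore]]];
    [lra | exact H0 | intros t Ht; apply Hcont; lra | lra |].
  assert (Hleft : exists d : posreal, forall u, tau - d < u < tau -> h u < 0).
  { destruct (Rle_lt_or_eq_dec _ _ Hnotpos) as [Hlt|Hzero].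
    - destruct (continuous_locally_lt h tau 0 (Hcont tau ltac:(lra)) Hlt) as [d Hnear].
      exists d; intros u Hu; apply Hnear, Rabs_def1; lra.
    - assert (Htau_s : tau < s)
        by (destruct (Req_dec tau s) as [Hts|]; [rewrite Hts in Hzero|]; lra).
      destruct (is_derive_pos_left_lt h tau (h' tau)) as [d Hnear];
        [apply Hder; lra | apply Hcross; lra |].
      exists d; intros u Hu; rewrite <- Hzero; apply Hnear, Hu. }
  destruct Hleft as [[d Hd] Hnear]; simpl in Hnear.
  set (u := Rmax (tau - d / 2) (tau / 2)).
  assert (Hu : tau - d < u < tau /\ 0 <= u) by (unfold u, Rmax; destruct Rle_dec; lra).
  specialize (Hnear u (proj1 Hu)); specialize (Hbefore u ltac:(lra)); lra.
Qed.

Lemma is_derive_continuous (h : R -> R) x d : is_derive h x d -> continuous h x.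
Proof. intros Hd; apply (@ex_derive_continuous R_AbsRing R_NormedModule); exists d; exact Hd. Qed.

Lemma is_derive_plus_const (h : R -> R) x d c : is_derive h x d -> is_derive (fun y => h y + c) x d.
Proof.
  intros Hd.
  pose proof (is_derive_plus h (fun _ => c) x d 0 Hd (is_derive_const c x)) as Hsum.
  replace d with (d + 0) by ring; exact Hsum.
Qed.

Lemma continuous_bounded_above (h : R -> R) (l r : R) :
  l <= r -> (forall x, l <= x <= r -> continuous h x) ->
  exists M, forall x, l <= x <= r -> h x <= M.
Proof.
  intros Hlr Hcont.
  destruct (continuity_ab_maj h l r Hlr) as [xM [HM _]].
  - intros x Hx; apply continuity_pt_filterlim, Hcont, Hx.
  - exists (h xM); exact HM.
Qed.

Lemma periodic1_plus_INR (f : R -> R) : periodic1 f -> forall n x, f (x + INR n) = f x.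
Proof.
  intros Hper n; induction n as [|n IH]; intros x.
  - simpl; rewrite Rplus_0_r; reflexivity.
  - rewrite S_INR, <- Rplus_assoc, Hper; apply IH.
Qed.

Lemma periodic1_ge (f : R -> R) k : periodic1 f -> (forall t, 0 <= t <= 1 -> k <= f t) ->
  forall x, 0 <= x -> k <= f x.
Proof.
  intros Hper Hk x Hx.
  destruct (base_Int_part x) as [Hlo Hhi].
  assert (Hnat : (0 <= Int_part x)%Z) by (assert (-1 < Int_part x)%Z by (apply lt_IZR; lra); lia).
  set (n := Z.to_nat (Int_part x)).
  assert (Hn : INR n = IZR (Int_part x)) by (unfold n; rewrite INR_IZR_INZ, Z2Nat.id; auto).
  replace x with ((x - INR n) + INR n) by ring.
  rewrite (periodic1_plus_INR f Hper); apply Hk; lra.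
Qed.

Lemma is_derive_comp_scal (f : R -> R) th t :
  ex_derive f (th * t) -> is_derive (fun s => f (th * s)) t (th * Derive f (th * t)).
Proof.
  intros Hf.
  apply (is_derive_comp f (fun s => th * s)); [apply Derive_correct, Hf|].
  auto_derive; [exact I | ring].
Qed.

Lemma div_sq_le_abs (D L k p : R) :
  0 < k -> k <= p -> Rabs D <= L -> D / p ^ 2 <= L / k ^ 2.
Proof.
  intros Hk Hkp HD.
  assert (HDL : D <= L) by (apply Rle_trans with (Rabs D); [apply Rle_abs | exact HD]).
  assert (HL : 0 <= L) by (apply Rle_trans with (Rabs D); [apply Rabs_pos | exact HD]).
  assert (Hk2 : 0 < k ^ 2) by (apply pow_lt; lra).
  assert (Hkp2 : k ^ 2 <= p ^ 2) by (apply pow_incr; lra).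
  apply Rle_trans with (L / p ^ 2).
  - apply Rmult_le_compat_r; [apply Rlt_le, Rinv_0_lt_compat; lra | exact HDL].
  - apply Rmult_le_compat_l; [exact HL | apply Rinv_le_contravar; assumption].
Qed.

(* The right-hand side is the derivative of (b eps / p + K eps^2) - g where g = y;
   there y p / eps = b + K eps p, so the quadratic term exceeds b^2 by at least
   2 b K eps p, which beats the drift of b eps / p. *)
Lemma supersolution_crossing (a b k L K eps p D y : R) :
  0 < a -> 0 < b -> 0 < eps -> 0 < k -> k <= p -> Rabs D <= L ->
  2 * a / k + L / k ^ 2 < K * k ->
  y = b * eps / p + K * eps ^ 2 ->
  0 < - b * eps * D / p ^ 2 - (- 2 * a * y - y ^ 2 * p ^ 2 / eps ^ 2 + b ^ 2).
Proof.
  intros Ha Hb Heps Hk Hkp HD HK Hy.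
  assert (HDk : D / p ^ 2 <= L / k ^ 2) by (apply div_sq_le_abs; assumption).
  assert (HL : 0 <= L) by (apply Rle_trans with (Rabs D); [apply Rabs_pos | exact HD]).
  assert (Hp : 0 < p) by lra.
  assert (HLk : 0 <= L / k ^ 2)
    by (apply Rmult_le_pos; [lra | apply Rlt_le, Rinv_0_lt_compat, pow_lt; lra]).
  assert (Hak : 0 < 2 * a / k) by (apply Rdiv_lt_0_compat; lra).
  assert (HKpos : 0 < K) by nra.
  assert (Hypos : 0 < y).
  { rewrite Hy; assert (0 < b * eps / p) by (apply Rdiv_lt_0_compat; nra); nra. }
  assert (Hsq : y ^ 2 * p ^ 2 / eps ^ 2 = (b + K * eps * p) ^ 2) by (rewrite Hy; field; lra).
  assert (Hdrift : b * eps * D / p ^ 2 <= b * eps * (L / k ^ 2)).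
  { unfold Rdiv at 1; rewrite Rmult_assoc; apply Rmult_le_compat_l; [nra | exact HDk]. }
  assert (Hgain : b * eps * (L / k ^ 2) < b * eps * (K * p)) by
    (apply Rmult_lt_compat_l; nra).
  replace (- b * eps * D / p ^ 2) with (- (b * eps * D / p ^ 2)) by (field; lra).
  rewrite Hsq.
  assert (0 <= (K * eps * p) ^ 2) by apply pow2_ge_0.
  assert (0 < a * y) by (apply Rmult_lt_0_compat; assumption).
  assert (0 <= b * eps * (L / k ^ 2)) by (apply Rmult_le_pos; [nra | exact HLk]).
  lra.
Qed.

(* The right-hand side is the derivative of g - (b eps / p - K eps^2 - A eps^2 / q)
   where g = y.  Writing y = b eps / p - eps psi, y >= 0 means p psi <= b, so the
   quadratic term gives at least b p psi >= b k psi, which beats the damping,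
   the drift of b eps / p and the decay of the layer. *)
Lemma subsolution_crossing (a b k L K A c eps p D q y : R) :
  0 < a -> 0 < b -> 0 < eps -> 0 < k -> k <= p -> Rabs D <= L ->
  2 * a / k + L / k ^ 2 < K * k -> 0 < A -> 0 < c <= b * k / 2 -> eps <= q ->
  y = b * eps / p - K * eps ^ 2 - A * eps ^ 2 / q -> 0 <= y ->
  0 < (- 2 * a * y - y ^ 2 * p ^ 2 / eps ^ 2 + b ^ 2)
      - (- b * eps * D / p ^ 2 + A * eps ^ 2 * c / q ^ 2).
Proof.
  intros Ha Hb Heps Hk Hkp HD HK HA Hc Hq Hy Hy0.
  assert (HL : 0 <= L) by (apply Rle_trans with (Rabs D); [apply Rabs_pos | exact HD]).
  assert (Hp : 0 < p) by lra.
  assert (HLk : 0 <= L / k ^ 2)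
    by (apply Rmult_le_pos; [lra | apply Rlt_le, Rinv_0_lt_compat, pow_lt; lra]).
  assert (HKpos : 0 < K) by (assert (0 < 2 * a / k) by (apply Rdiv_lt_0_compat; lra); nra).
  set (z := A * eps / q).
  assert (Hz : 0 < z) by (apply Rdiv_lt_0_compat; nra).
  set (psi := K * eps + z).
  assert (Hy' : y = b * eps / p - eps * psi) by (rewrite Hy; unfold psi, z; field; lra).
  assert (Hsq : y ^ 2 * p ^ 2 / eps ^ 2 = (b - p * psi) ^ 2) by (rewrite Hy'; field; lra).
  assert (Hpsi_b : p * psi <= b).
  { assert (Hyp : 0 <= y * (p / eps))
      by (apply Rmult_le_pos; [exact Hy0 | apply Rlt_le, Rdiv_lt_0_compat; lra]).
    replace (y * (p / eps)) with (b - p * psi) in Hyp by (rewrite Hy'; field; lra). lra. }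
  assert (Hpsi_k : k * psi <= p * psi) by (apply Rmult_le_compat_r; [unfold psi; nra | exact Hkp]).
  assert (Hquad : b * (p * psi) <= 2 * b * (p * psi) - (p * psi) ^ 2).
  { assert (0 <= p * psi) by (apply Rmult_le_pos; unfold psi; nra). nra. }
  assert (Hdamp : a * y <= a * (b * eps / k)).
  { apply Rmult_le_compat_l; [lra|].
    assert (b * eps / p <= b * eps / k)
      by (apply Rmult_le_compat_l; [nra | apply Rinv_le_contravar; lra]).
    assert (0 <= eps * psi) by (unfold psi; nra). lra. }
  assert (Hdrift : - b * eps * D / p ^ 2 <= b * eps * (L / k ^ 2)).
  { replace (- b * eps * D / p ^ 2) with (b * eps * (- D / p ^ 2)) by (field; lra).
    apply Rmult_le_compat_l; [nra | apply div_sq_le_abs; try lra; rewrite Rabs_Ropp; exact HD]. }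
  assert (Hlayer : A * eps ^ 2 * c / q ^ 2 <= b * k / 2 * z).
  { replace (A * eps ^ 2 * c / q ^ 2) with (c * z * (eps / q)) by (unfold z; field; lra).
    assert (Heq : eps / q <= 1) by (unfold Rdiv; rewrite <- (Rinv_r q) by lra;
      apply Rmult_le_compat_r; [apply Rlt_le, Rinv_0_lt_compat; lra | exact Hq]).
    assert (c * z * (eps / q) <= c * z * 1) by (apply Rmult_le_compat_l; nra).
    assert (c * z <= b * k / 2 * z) by (apply Rmult_le_compat_r; lra).
    lra. }
  assert (Hmargin : b * eps * (2 * a / k + L / k ^ 2) < b * eps * (K * k))
    by (apply Rmult_lt_compat_l; nra).
  assert (Hgain : b * eps * (K * k) + b * k * z <= b * (p * psi)).
  { replace (b * eps * (K * k) + b * k * z) with (b * (k * psi)) by (unfold psi; ring).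
    apply Rmult_le_compat_l; lra. }
  replace (a * (b * eps / k)) with (b * eps * (2 * a / k) / 2) in Hdamp by (field; lra).
  assert (0 < b * k * z) by (apply Rmult_lt_0_compat; [nra | exact Hz]).
  rewrite Hsq; lra.
Qed.

Section QuasiStationary.

Variables (a b T k L : R) (p p' : R -> R).
Hypotheses (Ha : 0 < a) (Hb : 0 < b) (HT : 0 < T) (Hk : 0 < k).
Hypothesis p_ge : forall s, 0 <= s <= T -> k <= p s.
Hypothesis p_deriv : forall s, 0 <= s <= T -> is_derive p s (p' s).
Hypothesis p'_bound : forall s, 0 <= s <= T -> Rabs (p' s) <= L.

Let K := (2 * a / k + L / k ^ 2 + k) / k.
Let c := b * k / 2.
Let A := b / k + 1.

Lemma K_margin : 2 * a / k + L / k ^ 2 < K * k.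
Proof.
  unfold K; replace ((2 * a / k + L / k ^ 2 + k) / k * k) with (2 * a / k + L / k ^ 2 + k)
    by (field; lra).
  lra.
Qed.

Lemma K_pos : 0 < K.
Proof.
  assert (0 <= L) by (apply Rle_trans with (Rabs (p' 0)); [apply Rabs_pos | apply p'_bound; lra]).
  assert (0 < 2 * a / k) by (apply Rdiv_lt_0_compat; lra).
  assert (0 <= L / k ^ 2)
    by (apply Rmult_le_pos; [lra | apply Rlt_le, Rinv_0_lt_compat, pow_lt; lra]).
  apply Rdiv_lt_0_compat; lra.
Qed.

Lemma c_pos : 0 < c.
Proof. unfold c; nra. Qed.

Lemma A_pos : 0 < A.
Proof. unfold A; assert (0 < b / k) by (apply Rdiv_lt_0_compat; lra); lra. Qed.

Lemma p_pos s : 0 <= s <= T -> 0 < p s.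
Proof. intros Hs; apply Rlt_le_trans with k; [exact Hk | apply p_ge, Hs]. Qed.

Lemma p_bounded : exists M, 0 < M /\ forall s, 0 <= s <= T -> p s <= M.
Proof.
  destruct (continuous_bounded_above p 0 T) as [M HM]; [lra | |].
  - intros s Hs; eapply is_derive_continuous, p_deriv, Hs.
  - exists M; split; [|exact HM].
    apply Rlt_le_trans with (p 0); [apply p_pos | apply HM]; lra.
Qed.

Section Solution.

Variables (eps : R) (g : R -> R).
Hypothesis Heps : 0 < eps.
Hypothesis g_init : g 0 = 0.
Hypothesis g_cont : forall s, 0 <= s <= T -> continuous g s.
Hypothesis g_deriv : forall s, 0 < s < T ->
  is_derive g s (- 2 * a * g s - (g s) ^ 2 * (p s) ^ 2 / eps ^ 2 + b ^ 2).

Let quasi s := b * eps / p s.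

Lemma quasi_deriv s : 0 <= s <= T -> is_derive quasi s (- b * eps * p' s / p s ^ 2).
Proof.
  intros Hs.
  pose proof (p_pos s Hs) as Hps.
  replace (- b * eps * p' s / p s ^ 2) with (b * eps * (- p' s / p s ^ 2)) by (field; lra).
  apply is_derive_scal, is_derive_inv; [apply p_deriv, Hs | lra].
Qed.

Lemma quasi_cont s : 0 <= s <= T -> continuous quasi s.
Proof. intros Hs; eapply is_derive_continuous, quasi_deriv, Hs. Qed.

Let rhs s := - 2 * a * g s - (g s) ^ 2 * (p s) ^ 2 / eps ^ 2 + b ^ 2.

(* g 0 = 0 gives no strict start, hence the shift by a small eta. *)
Lemma g_plus_nonneg eta : 0 < eta -> (forall s, 0 <= s <= T -> eta * p s < b * eps) ->
  forall s, 0 <= s <= T -> 0 <= g s + eta.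
Proof.
  intros Heta Hsmall.
  apply (barrier_nonneg (fun s => g s + eta) rhs T).
  - rewrite g_init; lra.
  - intros s Hs; apply (continuous_plus g (fun _ => eta));
      [apply g_cont, Hs | apply continuous_const].
  - intros s Hs; apply is_derive_plus_const, g_deriv, Hs.
  - intros s Hs Hcross; unfold rhs.
    replace (g s) with (- eta) by lra.
    assert (Hps : 0 < p s) by (apply p_pos; lra).
    assert (Hratio : 0 < eta * p s / eps < b).
    { split; [apply Rdiv_lt_0_compat; nra|].
      apply Rmult_lt_reg_r with eps; [exact Heps|].
      unfold Rdiv; rewrite Rmult_assoc, Rinv_l, Rmult_1_r by lra.
      apply Hsmall; lra. }
    replace ((- eta) ^ 2 * p s ^ 2 / eps ^ 2) with ((eta * p s / eps) ^ 2) by (field; lra).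
    nra.
Qed.

Lemma g_nonneg s : 0 <= s <= T -> 0 <= g s.
Proof.
  intros Hs.
  destruct p_bounded as [M [HM HpM]].
  apply Rle_plus_epsilon; intros e He.
  set (eta := Rmin e (b * eps / (2 * M))).
  assert (Heta : 0 < eta) by (apply Rmin_glb_lt; [exact He | apply Rdiv_lt_0_compat; nra]).
  assert (Heta_small : eta <= b * eps / (2 * M)) by apply Rmin_r.
  assert (0 <= g s + eta); [|assert (eta <= e) by apply Rmin_l; lra].
  apply g_plus_nonneg; [exact Heta | | exact Hs].
  intros u Hu.
  assert (Hbound : eta * p u <= b * eps / (2 * M) * M).
  { apply Rmult_le_compat; [lra | apply Rlt_le, p_pos, Hu | exact Heta_small | apply HpM, Hu]. }
  replace (b * eps / (2 * M) * M) with (b * eps / 2) in Hbound by (field; lra).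
  nra.
Qed.

Lemma g_le_supersolution s : 0 <= s <= T -> g s <= quasi s + K * eps ^ 2.
Proof.
  intros Hs.
  cut (0 <= quasi s - g s + K * eps ^ 2); [lra|].
  apply (barrier_nonneg (fun s => quasi s - g s + K * eps ^ 2)
           (fun s => - b * eps * p' s / p s ^ 2 - rhs s) T); [| | | | exact Hs].
  - unfold quasi; rewrite g_init.
    assert (0 < b * eps / p 0) by (apply Rdiv_lt_0_compat; [nra | apply p_pos; lra]).
    assert (0 < K * eps ^ 2) by (apply Rmult_lt_0_compat; [exact K_pos | apply pow_lt; exact Heps]).
    lra.
  - intros u Hu.
    apply (continuous_plus (fun s => quasi s - g s) (fun _ => K * eps ^ 2));
      [|apply continuous_const].
    apply (continuous_minus quasi g); [apply quasi_cont | apply g_cont]; exact Hu.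
  - intros u Hu; apply is_derive_plus_const, (is_derive_minus quasi g);
      [apply quasi_deriv | apply g_deriv]; lra.
  - intros u Hu Hcross.
    apply (supersolution_crossing a b k L K eps (p u) (p' u) (g u)); try assumption;
      [apply p_ge; lra | apply p'_bound; lra | exact K_margin | unfold quasi in Hcross; lra].
Qed.

Let layer s := A * eps ^ 2 / (eps + c * s).

Lemma layer_deriv s : 0 <= s -> is_derive layer s (- (A * eps ^ 2 * c / (eps + c * s) ^ 2)).
Proof.
  intros Hs.
  pose proof c_pos as Hc.
  unfold layer; auto_derive; [nra | field; nra].
Qed.

Lemma g_ge_subsolution s : 0 <= s <= T -> quasi s - K * eps ^ 2 - layer s <= g s.
Proof.
  intros Hs.
  pose proof c_pos as Hc; pose proof A_pos as HA.
  cut (0 <= g s - quasi s + layer s + K * eps ^ 2); [lra|].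
  apply (barrier_nonneg (fun s => g s - quasi s + layer s + K * eps ^ 2)
           (fun s => rhs s - (- b * eps * p' s / p s ^ 2)
                     + - (A * eps ^ 2 * c / (eps + c * s) ^ 2)) T);
    [| | | | exact Hs].
  - unfold quasi, layer; rewrite g_init, Rmult_0_r, Rplus_0_r.
    assert (Hp0 : k <= p 0) by (apply p_ge; lra).
    assert (b * eps / p 0 <= b * eps / k)
      by (apply Rmult_le_compat_l; [nra | apply Rinv_le_contravar; lra]).
    replace (A * eps ^ 2 / eps) with (b * eps / k + eps) by (unfold A; field; lra).
    assert (0 < K * eps ^ 2) by (apply Rmult_lt_0_compat; [exact K_pos | apply pow_lt; exact Heps]).
    lra.
  - intros u Hu.
    apply (continuous_plus (fun s => g s - quasi s + layer s) (fun _ => K * eps ^ 2));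
      [|apply continuous_const].
    apply (continuous_plus (fun s => g s - quasi s) layer).
    + apply (continuous_minus g quasi); [apply g_cont | apply quasi_cont]; exact Hu.
    + eapply is_derive_continuous, layer_deriv; lra.
  - intros u Hu; apply is_derive_plus_const, (is_derive_plus (fun s => g s - quasi s) layer).
    + apply (is_derive_minus g quasi); [apply g_deriv | apply quasi_deriv]; lra.
    + apply layer_deriv; lra.
  - intros u Hu Hcross; unfold rhs.
    pose proof (subsolution_crossing a b k L K A c eps (p u) (p' u) (eps + c * u) (g u)) as Hslope.
    unfold quasi, layer in Hcross.
    assert (0 < - 2 * a * g u - g u ^ 2 * p u ^ 2 / eps ^ 2 + b ^ 2 -
              (- b * eps * p' u / p u ^ 2 + A * eps ^ 2 * c / (eps + c * u) ^ 2)); [|lra].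
    apply Hslope; try assumption;
      [apply p_ge; lra | apply p'_bound; lra | exact K_margin | split; [exact Hc | unfold c; lra]
      | nra | lra | apply g_nonneg; lra].
Qed.

End Solution.

Lemma riccati_quasi_stationary_error t0 : 0 < t0 ->
  exists C, forall eps g, 0 < eps -> g 0 = 0 ->
    (forall s, 0 <= s <= T -> continuous g s) ->
    (forall s, 0 < s < T ->
       is_derive g s (- 2 * a * g s - (g s) ^ 2 * (p s) ^ 2 / eps ^ 2 + b ^ 2)) ->
    forall t, t0 <= t <= T -> Rabs (g t - b * eps / p t) <= C * eps ^ 2.
Proof.
  intros Ht0.
  pose proof c_pos as Hc; pose proof A_pos as HA.
  exists (K + A / (c * t0)); intros eps g Heps g_init g_cont g_deriv t Ht.
  assert (Hup := g_le_supersolution eps g Heps g_init g_cont g_deriv t ltac:(lra)).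
  assert (Hlo := g_ge_subsolution eps g Heps g_init g_cont g_deriv t ltac:(lra)).
  assert (Hlayer : A * eps ^ 2 / (eps + c * t) <= A / (c * t0) * eps ^ 2).
  { replace (A / (c * t0) * eps ^ 2) with (A * eps ^ 2 / (c * t0)) by (field; lra).
    apply Rmult_le_compat_l; [apply Rmult_le_pos; [lra | apply pow_le; lra]|].
    apply Rinv_le_contravar; nra. }
  assert (0 < K * eps ^ 2) by (apply Rmult_lt_0_compat; [apply K_pos | apply pow_lt; exact Heps]).
  assert (0 < A * eps ^ 2 / (eps + c * t))
    by (apply Rdiv_lt_0_compat; [apply Rmult_lt_0_compat; [lra | apply pow_lt; lra] | nra]).
  apply Rabs_le; lra.
Qed.

End QuasiStationary.

Theorem lemma1 (a b T theta : R) (f : R -> R) (gamma : R -> R -> R) :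
  0 < a -> 0 < b -> 0 < T -> 0 < theta ->
  periodic1 f -> C2 f ->
  (exists kappa, 0 < kappa /\ forall t, 0 <= t <= 1 -> kappa <= f t) ->
  (forall eps, 0 < eps -> riccati_solution a b theta eps T f (gamma eps)) ->
  forall t0, 0 < t0 <= T ->
  exists C eps0, 0 < eps0 /\
    forall eps, 0 < eps < eps0 ->
      forall t, t0 <= t <= T ->
        Rabs (gamma eps t - b * eps / f (theta * t)) <= C * eps ^ 2.
Proof.
  intros Ha Hb HT Hth Hper HC2 [k [Hk Hkf]] Hric t0 Ht0.
  set (p := fun s => f (theta * s)).
  set (p' := fun s => theta * Derive f (theta * s)).
  assert (p_ge : forall s, 0 <= s <= T -> k <= p s)
    by (intros s Hs; apply (periodic1_ge f k Hper Hkf); nra).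
  assert (p_deriv : forall s, is_derive p s (p' s))
    by (intros s; apply is_derive_comp_scal, HC2).
  assert (p'_deriv : forall s, is_derive p' s (theta * (theta * Derive (Derive f) (theta * s))))
    by (intros s; apply is_derive_scal, is_derive_comp_scal, HC2).
  destruct (continuous_bounded_above (fun s => Rabs (p' s)) 0 T) as [L p'_bound]; [lra | |].
  { intros s _; apply (continuous_Rabs_comp p'); eapply is_derive_continuous, p'_deriv. }
  destruct (riccati_quasi_stationary_error a b T k L p p' Ha Hb HT Hk p_ge
              (fun s _ => p_deriv s) p'_bound t0 (proj1 Ht0)) as [C HC].
  exists C, 1; split; [lra|].
  intros eps [Heps _] t Ht.
  destruct (Hric eps Heps) as [g_init [g_cont g_deriv]].
  exact (HC eps (gamma eps) Heps g_init g_cont g_deriv t Ht).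
Qed.
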